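(* Let $m\ge 2$, let $n_1,\dots,n_m\ge 4$ be even, and let $\mathcal{C}=\mathcal{C}(C_{n_1},\dots,C_{n_m})$ be the even chain cycle. Let $V_1=\{v^2_1,\dots,v^m_1\}$ and $V_2=V(\mathcal{C})\setminus V_1$ (so each vertex of $V_2$ has a unique name $v^i_j$ and lies in exactly one cycle $C_{n_i}$). Let $v^i_j,v^k_l\in V_2$ be distinct. (a) If $i=k$, then $v^i_j$ and $v^i_l$ are mutually maximally distant in $\mathcal{C}$ if and only if $d(v^i_j,v^i_l)=n_i/2$ (the diameter of $C_{n_i}$). (b) If $i\neq k$, then $v^i_j$ and $v^k_l$ are mutually maximally distant in $\mathcal{C}$ if and only if $d(v^i_j,v^k_l)$ equals the diameter of $\mathcal{C}$.
   Context: Let $C_{n_1},\dots,C_{n_m}$ be pairwise disjoint cycles, $V(C_{n_i})=\{v^i_1,\dots,v^i_{n_i}\}$ with $v^i_j$ adjacent to $v^i_{j+1}$ (indices mod $n_i$). The even chain cycle $\mathcal{C}(C_{n_1},\dots,C_{n_m})$ (all $n_i$ even) is obtained by identifying $v^i_{n_i/2+1}$ with $v^{i+1}_1$ for each $i=1,\dots,m-1$; the identified vertex carries both names. A vertex $u$ is maximally distant from $v$ if every neighbor $w$ of $u$ satisfies $d(v,w)\le d(u,v)$; $u,v$ are mutually maximally distant if each is maximally distant from the other. *)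

From mathcomp Require Import all_boot.
Set Implicit Arguments. Unset Strict Implicit. Unset Printing Implicit Defensive.

(* Even chain cycle C(C_{n_1},...,C_{n_m}).  0-based indexing:
   cycle i : 'I_m has vertices named (i, j) with j : 'I_(n i),
   paper's v^{i+1}_{j+1} = our name (i, j).
   Identification: name (i, n i ./2) (= v^{i+1}_{n_{i+1}/2+1}) is identified
   with name (i+1, 0) (= v^{i+2}_1). *)
Section ChainCycle.
Variables (m : nat) (n : 'I_m -> nat).

Definition cname := {i : 'I_m & 'I_(n i)}.

Definition cyc_adj (a b : cname) : bool :=
  (tag a == tag b) &&
  (((tagged a).+1 %% n (tag a) == tagged b) ||
   ((tagged b).+1 %% n (tag b) == tagged a)).

Definition ident (a b : cname) : bool :=
  [&& (tag b == (tag a).+1 :> nat), (tagged a == (n (tag a))./2 :> nat)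
    & (tagged b == 0 :> nat)].

Definition same (a b : cname) : bool := [|| a == b, ident a b | ident b a].

(* vertices: each vertex is represented by one name; the names v^{i+1}_1
   (i >= 1) are dropped, the vertex being represented by v^i_{n_i/2+1}. *)
Definition cvert := {x : cname | ~~ ((0 < tag x) && (tagged x == 0 :> nat))}.

Definition cadj (u w : cvert) : bool :=
  [exists a : cname, exists b : cname,
     [&& same (val u) a, same (val w) b & cyc_adj a b]].

(* graph distance: length of a shortest walk (#|cvert| if none exists) *)
Definition cdist (u w : cvert) : nat :=
  find (fun k => [exists p : k.-tuple cvert, path cadj u p && (last u p == w)])
       (iota 0 #|{: cvert}|).

Definition cdiam : nat := \max_(u : cvert) \max_(w : cvert) cdist u w.

Definition max_distant (u v : cvert) : Prop :=
  forall w : cvert, cadj u w -> cdist v w <= cdist u v.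

Definition mutually_max_distant (u v : cvert) : Prop :=
  max_distant u v /\ max_distant v u.

Definition inV1 (u : cvert) : bool :=
  [exists a : cname, [&& same (val u) a, 0 < tag a & (tagged a == 0 :> nat)]].

End ChainCycle.

From mathcomp Require Import all_boot zify.
Set Implicit Arguments. Unset Strict Implicit. Unset Printing Implicit Defensive.

(* The
   proof computes the graph distance in closed form.  Cycle i, of length
   n_i = 2 h_i, is entered at position 0 and left at the antipodal position h_i,
   so the chain has a "spine" of length L = h_0 + ... + h_{m-1}.  The name (i, j)
   sits at spine position pos = h_0 + ... + h_{i-1} + d_i(0, j), d_i being the
   distance in the cycle C_{n_i}.  The function ndist (distance inside C_{n_i}
   for two names of the same cycle, difference of spine positions otherwise) is
   the graph distance: it changes by at most one along an edge, and every vertex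
   w != u has a neighbour one step closer to u, giving a walk of length ndist.

   Maximal distance then becomes a local optimisation problem.  For
   vertices of V_2 in different cycles, mutual maximality forces one of them to
   be the first entry (position 0) and the other the last exit (position L);
   as no two vertices are farther apart than L, this is the diameter. *)

Lemma find_iota (P : pred nat) (k N : nat) :
  k < N -> P k -> (forall j, j < k -> ~~ P j) -> find P (iota 0 N) = k.
Proof.
move=> kN Pk nP; rewrite -(subnKC (ltnW kN)) iotaD find_cat.
have -> : has P (iota 0 k) = false.
  by apply/hasPn => j; rewrite mem_iota add0n => /andP [_ /nP].
rewrite size_iota add0n; have -> : N - k = (N - k).-1.+1 by lia.
by rewrite /= Pk addn0.
Qed.

(* A sequence whose labels enumerate 0, ..., d-1 has distinct items, so d <= #|T|. *)
Lemma iota_labels_card (T : finType) (f : T -> nat) (s : seq T) (d : nat) :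
  map f s = iota 0 d -> d <= #|T|.
Proof.
move=> fs; have s_uniq : uniq s by apply: (map_uniq (f := f)); rewrite fs iota_uniq.
by rewrite -(size_iota 0 d) -fs size_map -(card_uniqP s_uniq); exact: max_card.
Qed.

Lemma leq_bigmax2 (T : finType) (F : T -> T -> nat) (x y : T) :
  F x y <= \max_u \max_w F u w.
Proof. exact: leq_trans (leq_bigmax (F := F x) y) (leq_bigmax x). Qed.

Lemma bigmax2_leq (T : finType) (F : T -> T -> nat) (b : nat) :
  (forall x y, F x y <= b) -> \max_u \max_w F u w <= b.
Proof. by move=> Fb; apply/bigmax_leqP => x _; apply/bigmax_leqP => y _. Qed.

Definition dist (a b : nat) : nat := (a - b) + (b - a).

Lemma distl a b : a <= b -> dist a b = b - a. Proof. rewrite /dist; lia. Qed.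
Lemma distr a b : b <= a -> dist a b = a - b. Proof. rewrite /dist; lia. Qed.

Ltac split_dist := repeat match goal with |- context [dist ?a ?b] =>
  let H := fresh in case: (leqP a b) => H; [rewrite (distl H) | rewrite (distr (ltnW H))] end.

Definition cycd (N j l : nat) : nat := minn (dist j l) (N - dist j l).

Definition succ_mod (N l : nat) : nat := if l.+1 == N then 0 else l.+1.
Definition pred_mod (N l : nat) : nat := if l == 0 then N.-1 else l.-1.
Definition nbrs (N l : nat) : seq nat := [:: succ_mod N l; pred_mod N l].

Definition cyc_adjacent (N l l' : nat) : Prop :=
  (l.+1 = l' \/ l'.+1 = l) \/ (l.+1 = N /\ l' = 0 \/ l'.+1 = N /\ l = 0).

Lemma succ_modE N l : l < N -> l.+1 %% N = succ_mod N l.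
Proof.
rewrite /succ_mod; case: eqP => [->|ne lN]; first by rewrite modnn.
by rewrite modn_small //; lia.
Qed.

Lemma pred_modK N l : l < N -> (pred_mod N l).+1 %% N = l.
Proof.
move=> lN; rewrite /pred_mod; case: eqP => [->|ne]; first by rewrite prednK ?modnn //; lia.
by rewrite prednK ?modn_small //; lia.
Qed.

Lemma nbrs_lt N l l' : l < N -> l' \in nbrs N l -> l' < N.
Proof. by rewrite /nbrs !inE /succ_mod /pred_mod => lN /orP [] /eqP ->; case: eqP; lia. Qed.

Lemma cyc_adjacent_mod N l l' : l < N -> l' < N ->
  (l.+1 %% N == l') || (l'.+1 %% N == l) -> cyc_adjacent N l l'.
Proof.
move=> lN l'N; rewrite /cyc_adjacent !succ_modE // /succ_mod.
by case: (l.+1 =P N); case: (l'.+1 =P N) => ? ? /orP [] /eqP; lia.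
Qed.

Lemma cycd_sym N j l : cycd N j l = cycd N l j.
Proof. by rewrite /cycd /dist addnC. Qed.

Lemma dist_addl o a b : dist (o + a) (o + b) = dist a b.
Proof. rewrite /dist; lia. Qed.

Lemma cycd_self N j : cycd N j j = 0.
Proof. by rewrite /cycd /dist subnn min0n. Qed.

Lemma cycd_to_half N H j : N = 2 * H -> j < N -> cycd N j H = H - cycd N 0 j.
Proof. move=> -> jN; rewrite /cycd; split_dist; lia. Qed.

Lemma cycd_le_half H j l : cycd (2 * H) j l <= H.
Proof. rewrite /cycd; lia. Qed.

Lemma cycd_lipschitz N j l l' : j < N -> l < N -> l' < N -> cyc_adjacent N l l' ->
  cycd N j l' <= (cycd N j l).+1.
Proof. rewrite /cyc_adjacent /cycd; split_dist; lia. Qed.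

Lemma cycd_down N j l : j < N -> l < N -> 0 < cycd N j l ->
  exists2 l', l' \in nbrs N l & cycd N j l' + 1 = cycd N j l.
Proof.
move=> jN lN d_pos; suff : cycd N j (succ_mod N l) + 1 = cycd N j l \/
                         cycd N j (pred_mod N l) + 1 = cycd N j l.
  by case=> ?; [exists (succ_mod N l) | exists (pred_mod N l)]; rewrite ?inE ?eqxx ?orbT.
move: jN lN d_pos; case: N => [//|N]; case: l => [|l];
  rewrite /cycd /succ_mod /pred_mod /=; case: eqP; split_dist; lia.
Qed.

Lemma cycd_up N H j l : N = 2 * H -> j < N -> l < N -> cycd N j l < H ->
  exists2 l', l' \in nbrs N l & cycd N j l' = cycd N j l + 1.
Proof.
move=> -> jN lN d_lt; suff : cycd (2 * H) j (succ_mod (2 * H) l) = cycd (2 * H) j l + 1 \/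
                          cycd (2 * H) j (pred_mod (2 * H) l) = cycd (2 * H) j l + 1.
  by case=> ?; [exists (succ_mod (2 * H) l) | exists (pred_mod (2 * H) l)];
    rewrite ?inE ?eqxx ?orbT.
move: jN lN d_lt; case: l => [|l];
  rewrite /cycd /succ_mod /pred_mod /=; case: eqP; split_dist; lia.
Qed.

(* The development works for any positive even cycle lengths. *)
Section ChainCycleDistance.
Variables (m : nat) (n : 'I_m -> nat).
Hypothesis n_gt0 : forall i, 0 < n i.
Hypothesis n_even : forall i, ~~ odd (n i).

Local Notation name := (cname n).
Local Notation vertex := (cvert n).

Definition half (i : 'I_m) : nat := (n i)./2.

Lemma n_half (i : 'I_m) : n i = 2 * half i.
Proof.
have := odd_double_half (n i); rewrite (negbTE (n_even i)) add0n -mul2n /half; lia.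
Qed.

Lemma half_gt0 (i : 'I_m) : 0 < half i.
Proof. have := n_gt0 i; rewrite n_half; lia. Qed.

Lemma half_lt (i : 'I_m) : half i < n i.
Proof. have := half_gt0 i; rewrite n_half; lia. Qed.

(* Spine position h_0 + ... + h_{k-1} of the entry of cycle k; offset m is the
   length L of the spine. *)
Definition offset (k : nat) : nat := \sum_(i < m | i < k) half i.

Lemma offset0 : offset 0 = 0.
Proof. by rewrite /offset big_pred0. Qed.

Lemma offsetS (i : 'I_m) : offset i.+1 = offset i + half i.
Proof.
rewrite /offset (bigD1 i) //= addnC; congr (_ + _); apply: eq_bigl => j.
by rewrite ltnS andbC -val_eqE -ltn_neqAle.
Qed.

Lemma offset_mono (k k' : nat) : k <= k' -> offset k <= offset k'.
Proof.
move=> le_kk'; rewrite /offset !(big_mkcond (fun i : 'I_m => i < _)) /=.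
apply: leq_sum => i _; case: (ltnP i k) => [lt_ik|//].
by rewrite (leq_trans lt_ik le_kk').
Qed.

Definition height (c : name) : nat := cycd (n (tag c)) 0 (tagged c).

Definition pos (c : name) : nat := offset (tag c) + height c.

Definition ndist (s c : name) : nat :=
  if tag s == tag c then cycd (n (tag s)) (tagged s) (tagged c)
  else dist (pos s) (pos c).

(* Index-free unfolding lemmas: they avoid rewriting the cycle index i, on
   which the type of the position tagged c depends. *)
Lemma tagged_lt (c : name) (i : 'I_m) : tag c = i -> tagged c < n i.
Proof. by move=> <-. Qed.

Lemma posE (c : name) (i : 'I_m) : tag c = i -> pos c = offset i + cycd (n i) 0 (tagged c).
Proof. by move=> <-. Qed.

Lemma height_le (c : name) : height c <= half (tag c).
Proof. by have := cycd_le_half (half (tag c)) 0 (tagged c); rewrite -n_half. Qed.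

Lemma height_eq0 (c : name) : height c = 0 -> tagged c = 0 :> nat.
Proof. have := ltn_ord (tagged c); rewrite /height /cycd /dist; lia. Qed.

Lemma height_eq_half (c : name) : height c = half (tag c) -> tagged c = half (tag c) :> nat.
Proof. have := ltn_ord (tagged c); have := n_half (tag c); rewrite /height /cycd /dist; lia. Qed.

Lemma pos_le_total (c : name) : pos c <= offset m.
Proof.
have := offset_mono (ltn_ord (tag c)); rewrite offsetS /pos; have := height_le c; lia.
Qed.

(* The only vertex named (i, 0) is the first entry (0, 0): for i > 0 that vertex
   is represented by the exit name (i-1, h_{i-1}). *)
Lemma vertex_entry (w : vertex) : tagged (val w) = 0 :> nat -> tag (val w) = 0 :> nat.
Proof. by move=> w0; have := valP w; rewrite w0 eqxx andbT lt0n negbK => /eqP. Qed.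

Lemma pos_lt (u w : vertex) : tag (val u) < tag (val w) -> pos (val u) < pos (val w).
Proof.
move=> lt_uw; have := offset_mono lt_uw; rewrite offsetS /pos; have := height_le (val u).
have : 0 < height (val w).
  rewrite lt0n; apply/negP => /eqP/height_eq0/vertex_entry w0.
  by rewrite w0 in lt_uw.
lia.
Qed.

Lemma ndist_same_cycle (s c : name) (i : 'I_m) :
  tag s = i -> tag c = i -> ndist s c = cycd (n i) (tagged s) (tagged c).
Proof. by move=> <- E; rewrite /ndist ifT //; apply/eqP. Qed.

Lemma ndist_other_cycle (s c : name) : tag s != tag c -> ndist s c = dist (pos s) (pos c).
Proof. by rewrite /ndist => /negbTE ->. Qed.

Lemma ndist_sym (s c : name) : ndist s c = ndist c s.
Proof.
rewrite /ndist eq_sym /dist addnC; case: eqP => [E|//].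
by rewrite cycd_sym; congr (cycd (n _)).
Qed.

Lemma ndist_self (c : name) : ndist c c = 0.
Proof. by rewrite (ndist_same_cycle erefl erefl) /cycd /dist subnn min0n. Qed.

Lemma identP (a b : name) : reflect
  [/\ tag b = (tag a).+1 :> nat, tagged a = half (tag a) :> nat & tagged b = 0 :> nat]
  (ident a b).
Proof.
apply: (iffP and3P) => [[/eqP ? /eqP ? /eqP ?] | [? ? ?]]; first by [].
by split; apply/eqP.
Qed.

Lemma pos_ident (a b : name) : ident a b -> pos a = pos b.
Proof.
case/identP => tb ta t0; rewrite /pos /height tb offsetS ta t0.
have := n_half (tag a); rewrite /cycd /dist; lia.
Qed.

Lemma ndist_ident (s a b : name) : ident a b -> ndist s a = ndist s b.
Proof.
move=> ab; have pab := pos_ident ab; case/identP: ab => tb ta t0.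
have ne_ab : tag a != tag b by apply/eqP => E; move: tb; rewrite E; lia.
case: (tag s =P tag a) => [Esa|ne_sa].
  have ne_sb : tag s != tag b by rewrite Esa.
  rewrite (ndist_same_cycle Esa erefl) (ndist_other_cycle ne_sb) -pab (posE Esa) /pos /height.
  rewrite dist_addl ta !(cycd_to_half (n_half _)) ?tagged_lt ?n_gt0 // cycd_self subn0.
  by rewrite distl // n_half cycd_le_half.
case: (tag s =P tag b) => [Esb|ne_sb'].
  have ne_sa' : tag s != tag a by apply/eqP.
  rewrite (ndist_same_cycle Esb erefl) (ndist_other_cycle ne_sa') pab (posE Esb) /pos /height t0.
  by rewrite dist_addl cycd_self cycd_sym distr ?subn0.
by move/eqP: ne_sa => ne_sa; move/eqP: ne_sb' => ne_sb'; rewrite !ndist_other_cycle // pab.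
Qed.

Lemma ndist_same (s a b : name) : same a b -> ndist s a = ndist s b.
Proof. by case/or3P=> [/eqP -> | /ndist_ident | /ndist_ident ->]. Qed.

Lemma ndist_le_total (s c : name) : ndist s c <= offset m.
Proof.
rewrite /ndist; case: eqP => _.
  have := offset_mono (ltn_ord (tag s)); rewrite offsetS.
  by have := cycd_le_half (half (tag s)) (tagged s) (tagged c); rewrite -n_half; lia.
by have := pos_le_total s; have := pos_le_total c; rewrite /dist; lia.
Qed.

Lemma name_eq (a b : name) : tag a = tag b -> tagged a = tagged b :> nat -> a = b.
Proof.
case: a b => [i j] [k l] /= E; case: k / E l => l E.
by congr existT; apply: val_inj.
Qed.

Lemma ndist_eq0 (u w : vertex) : ndist (val u) (val w) = 0 -> u = w.
Proof.
case: (tag (val u) =P tag (val w)) => [E | /eqP ne_uw].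
  rewrite (ndist_same_cycle E erefl); have := tagged_lt E; have := ltn_ord (tagged (val w)).
  rewrite /cycd /dist => lt_w lt_u d0; apply: val_inj; apply: name_eq => //; lia.
rewrite (ndist_other_cycle ne_uw) /dist.
case: (ltngtP (tag (val u)) (tag (val w))) => [lt|lt|/val_inj eq]; last by rewrite eq eqxx in ne_uw.
- by have := pos_lt lt; lia.
- by have := pos_lt lt; lia.
Qed.

Lemma cyc_adjP (a b : name) :
  cyc_adj a b -> tag a = tag b /\ cyc_adjacent (n (tag a)) (tagged a) (tagged b).
Proof.
case/andP => /eqP E adj_ab; split => //; apply: cyc_adjacent_mod => //; first exact: tagged_lt.
move: adj_ab (ltn_ord (tagged b)); move: (nat_of_ord (tagged b)) => l.
by rewrite -E.
Qed.

Lemma cyc_adj_sym (a b : name) : cyc_adj a b = cyc_adj b a.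
Proof. by rewrite /cyc_adj eq_sym orbC. Qed.

Lemma pos_step (a b : name) : cyc_adj a b -> pos b <= (pos a).+1.
Proof.
case/cyc_adjP => E adj_ab; rewrite (posE (esym E)) (posE erefl).
have := cycd_lipschitz (n_gt0 (tag a)) (ltn_ord _) (tagged_lt (esym E)) adj_ab; lia.
Qed.

Lemma ndist_step (s a b : name) : cyc_adj a b -> ndist s b <= (ndist s a).+1.
Proof.
move=> adj_ab; have [E adj'] := cyc_adjP adj_ab.
case: (tag s =P tag a) => [Esa | /eqP ne_sa].
  rewrite (ndist_same_cycle Esa erefl) (ndist_same_cycle Esa (esym E)).
  exact: cycd_lipschitz (tagged_lt Esa) (ltn_ord _) (tagged_lt (esym E)) adj'.
have ne_sb : tag s != tag b by rewrite -E.
rewrite !ndist_other_cycle //; have := pos_step adj_ab.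
by rewrite cyc_adj_sym in adj_ab; have := pos_step adj_ab; rewrite /dist; lia.
Qed.

Lemma ndist_cadj (s : name) (x y : vertex) :
  cadj x y -> ndist s (val y) <= (ndist s (val x)).+1.
Proof.
case/existsP=> a /existsP [b /and3P [xa yb adj_ab]].
by rewrite (ndist_same s xa) (ndist_same s yb); apply: ndist_step.
Qed.

Lemma cycle_nbr (t : name) (l : nat) : l \in nbrs (n (tag t)) (tagged t) ->
  exists2 c : name, cyc_adj c t & tag c = tag t /\ tagged c = l :> nat.
Proof.
move=> nb_l; have lt_l := nbrs_lt (ltn_ord (tagged t)) nb_l.
exists (existT _ (tag t) (Ordinal lt_l)) => //; apply/andP; split => //=.
move: nb_l; rewrite !inE => /orP [] /eqP ->.
- by rewrite (succ_modE (ltn_ord _)) eqxx orbT.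
- by rewrite (pred_modK (ltn_ord _)) eqxx.
Qed.

Lemma descent_at (s t : name) : 0 < ndist s t ->
  (pos s < pos t -> 0 < height t) -> (pos t < pos s -> height t < half (tag t)) ->
  exists2 c : name, cyc_adj c t & ndist s c + 1 = ndist s t.
Proof.
move=> d_pos entry_ok exit_ok.
case: (tag s =P tag t) => [E | /eqP ne].
  rewrite (ndist_same_cycle E erefl) in d_pos *.
  have [l nb_l dl] := cycd_down (tagged_lt E) (ltn_ord _) d_pos.
  have [c adj_ct [Ec El]] := cycle_nbr nb_l.
  by exists c; rewrite // (ndist_same_cycle E Ec) El.
have step : exists2 l, l \in nbrs (n (tag t)) (tagged t) &
    dist (pos s) (offset (tag t) + cycd (n (tag t)) 0 l) + 1 = ndist s t.
  move: d_pos; rewrite (ndist_other_cycle ne) /dist.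
  case: (ltngtP (pos s) (pos t)) => [lt|gt|eq]; last by lia.
  - have [l nb_l dl] := cycd_down (n_gt0 _) (ltn_ord _) (entry_ok lt).
    by exists l => //; move: lt dl; rewrite /pos /height; lia.
  - have [l nb_l dl] := cycd_up (n_half _) (n_gt0 _) (ltn_ord _) (exit_ok gt).
    by exists l => //; move: gt dl; rewrite /pos /height; lia.
have [l nb_l dl] := step; have [c adj_ct [Ec El]] := cycle_nbr nb_l.
exists c => //; rewrite ndist_other_cycle; last by rewrite Ec.
by rewrite (posE Ec) El.
Qed.

Definition entry_name (i : 'I_m) : name := existT _ i (Ordinal (n_gt0 i)).

Definition exit_name (i : 'I_m) : name := existT _ i (Ordinal (half_lt i)).

Lemma ident_entry (t : name) (k : 'I_m) :
  k = (tag t).+1 :> nat -> tagged t = half (tag t) :> nat -> ident t (entry_name k).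
Proof. by move=> ? ?; apply/identP. Qed.

Lemma vertex_of_name (c : name) : exists x : vertex, same (val x) c.
Proof.
case: (boolP ((0 < tag c) && (tagged c == 0 :> nat))) => [/andP [tc_pos /eqP c0] | ok].
  have lt_i : (tag c).-1 < m by have := ltn_ord (tag c); lia.
  have ok : ~~ ((0 < tag (exit_name (Ordinal lt_i))) &&
                (tagged (exit_name (Ordinal lt_i)) == 0 :> nat)).
    by rewrite /= eqn0Ngt half_gt0 andbF.
  exists (exist _ (exit_name (Ordinal lt_i)) ok); apply/orP; right; apply/orP; left.
  by apply/identP; split => //=; lia.
by exists (exist _ c ok); rewrite /same eqxx.
Qed.

(* Every w != u has a name with a neighbour one step closer to u; at the exit of a
   cycle the descent continues through the entry of the next cycle. *)
Lemma name_descent (u w : vertex) : u != w -> exists c b, [/\ same (val w) b, cyc_adj c b &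
  ndist (val u) c + 1 = ndist (val u) (val w)].
Proof.
move=> ne_uw; set s := val u; set t := val w.
have d_pos : 0 < ndist s t by rewrite lt0n; apply: contra ne_uw => /eqP/ndist_eq0 ->.
case: (boolP ((pos t < pos s) && (height t == half (tag t)))) => [/andP [gt /eqP ht] | not_exit].
  have lt_k : (tag t).+1 < m.
    rewrite ltn_neqAle ltn_ord andbT; apply/eqP => km.
    by have := pos_le_total s; move: gt; rewrite /pos ht -offsetS km; lia.
  have tt' := ident_entry (k := Ordinal lt_k) erefl (height_eq_half ht).
  have [c adj_c dc] : exists2 c, cyc_adj c (entry_name (Ordinal lt_k)) &
      ndist s c + 1 = ndist s (entry_name (Ordinal lt_k)).
    apply: descent_at; first by rewrite -(ndist_ident s tt').
      by rewrite -(pos_ident tt'); lia.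
    by rewrite /height cycd_self half_gt0.
  exists c, (entry_name (Ordinal lt_k)); split => //; last by rewrite (ndist_ident s tt').
  by apply/orP; right; apply/orP; left.
have entry_ok : pos s < pos t -> 0 < height t.
  move=> lt; rewrite lt0n; apply/negP => /eqP h0; move: lt.
  by rewrite /pos h0 (vertex_entry (height_eq0 h0)) offset0.
have exit_ok : pos t < pos s -> height t < half (tag t).
  by move=> gt; rewrite ltn_neqAle height_le andbT; move: not_exit; rewrite gt.
have [c adj_c dc] := descent_at d_pos entry_ok exit_ok.
by exists c, t; rewrite /same eqxx.
Qed.

Lemma descent (u w : vertex) : u != w ->
  exists2 x : vertex, cadj x w & ndist (val u) (val x) + 1 = ndist (val u) (val w).
Proof.
case/name_descent => c [b [wb adj_cb dc]]; have [x xc] := vertex_of_name c.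
exists x; last by rewrite (ndist_same _ xc).
by apply/existsP; exists c; apply/existsP; exists b; rewrite xc wb.
Qed.

Lemma ndist_path (s : name) (x : vertex) (p : seq vertex) :
  path (@cadj m n) x p -> ndist s (val (last x p)) <= ndist s (val x) + size p.
Proof.
elim: p x => [|y p IHp] x /=; first by rewrite addn0.
by case/andP => /(ndist_cadj s) xy /IHp; rewrite /= in xy *; lia.
Qed.

Lemma walk_of_ndist (u : vertex) (d : nat) (w : vertex) : ndist (val u) (val w) = d ->
  exists p : seq vertex, [/\ path (@cadj m n) u p, last u p = w, size p = d &
    map (fun x : vertex => ndist (val u) (val x)) (u :: p) = iota 0 d.+1].
Proof.
elim: d w => [|d IHd] w dw.
  by exists [::]; rewrite /= (ndist_eq0 dw) ndist_self.
have ne_uw : u != w by apply/eqP => uw; move: dw; rewrite uw ndist_self.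
have [x adj_xw dx] := descent ne_uw.
have [|p [walk_p last_p size_p labels]] := IHd x; first by lia.
exists (rcons p w); split; first by rewrite rcons_path walk_p last_p.
- by rewrite last_rcons.
- by rewrite size_rcons size_p.
by rewrite -rcons_cons map_rcons labels dw -cats1 -(iotaD 0 d.+1 1) addn1.
Qed.

Lemma cdist_ndist (u w : vertex) : cdist u w = ndist (val u) (val w).
Proof.
have [p [walk_p last_p size_p labels]] := walk_of_ndist (erefl (ndist (val u) (val w))).
apply: find_iota; first exact: iota_labels_card labels.
  by apply/existsP; exists (Tuple (introT eqP size_p)); rewrite /= walk_p last_p eqxx.
move=> k lt_k; apply/existsP => -[q /andP [walk_q /eqP last_q]].
by have := ndist_path (val u) walk_q; rewrite last_q size_tuple ndist_self; lia.
Qed.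

Lemma cdist_sym (u v : vertex) : cdist u v = cdist v u.
Proof. by rewrite !cdist_ndist ndist_sym. Qed.

Lemma cdist_le_diam (u v : vertex) : cdist u v <= cdiam n.
Proof. exact: leq_bigmax2. Qed.

Lemma cdiam_le_total : cdiam n <= offset m.
Proof. by apply: bigmax2_leq => x y; rewrite cdist_ndist ndist_le_total. Qed.

Lemma notV1_name (u : vertex) (a : name) : ~~ inV1 u -> same (val u) a -> a = val u.
Proof.
move=> hu /or3P [/eqP -> // | ua | au]; exfalso.
  move: hu => /existsP; apply; exists a; case/identP: (ua) => ta _ a0.
  by rewrite /same ua orbT /= ta a0 eqxx.
case/identP: au => tu _ u0; have := valP u.
by rewrite /= tu u0 eqxx.
Qed.

Lemma notV1_exit (u : vertex) :
  ~~ inV1 u -> tagged (val u) = half (tag (val u)) :> nat -> (tag (val u)).+1 = m.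
Proof.
move=> hu uh; apply/eqP; rewrite eqn_leq ltn_ord /= leqNgt; apply/negP => lt_k.
move: hu => /existsP; apply; exists (entry_name (Ordinal lt_k)).
by rewrite /same (ident_entry (k := Ordinal lt_k) erefl uh) orbT.
Qed.

Lemma notV1_nbr (u w : vertex) : ~~ inV1 u -> cadj u w ->
  exists2 b : name, same (val w) b & cyc_adj (val u) b.
Proof.
move=> hu /existsP [a /existsP [b /and3P [ua wb adj_ab]]].
by exists b; rewrite // -(notV1_name hu ua).
Qed.

Lemma farther_nbr (u v : vertex) (b : name) :
  cyc_adj b (val u) -> ndist (val v) (val u) < ndist (val v) b -> ~ max_distant u v.
Proof.
move=> adj_bu far md; have [w wb] := vertex_of_name b.
have adj_uw : cadj u w.
  apply/existsP; exists (val u); apply/existsP; exists b.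
  by rewrite wb cyc_adj_sym adj_bu /same eqxx.
rewrite ndist_sym in far.
by have := md w adj_uw; rewrite !cdist_ndist (ndist_same _ wb); lia.
Qed.

Lemma max_distant_same_cycle (u v : vertex) :
  tag (val u) = tag (val v) -> max_distant u v -> cdist u v = half (tag (val u)).
Proof.
move=> E md; rewrite cdist_ndist ndist_sym (ndist_same_cycle (esym E) erefl).
apply/anti_leq/andP; split.
  by have := cycd_le_half (half (tag (val u))) (tagged (val v)) (tagged (val u)); rewrite -n_half.
rewrite leqNgt; apply/negP => lt_half.
have [l nb_l dl] := cycd_up (n_half _) (tagged_lt (esym E)) (ltn_ord _) lt_half.
have [b adj_bu [Eb El]] := cycle_nbr nb_l.
apply: (farther_nbr adj_bu _ md).
by rewrite (ndist_same_cycle (esym E) erefl) (ndist_same_cycle (esym E) Eb) El dl addn1.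
Qed.

(* ... and antipodal vertices of V_2 are maximally distant: their neighbours stay
   in the same cycle. *)
Lemma half_max_distant (u v : vertex) : ~~ inV1 u ->
  tag (val u) = tag (val v) -> cdist u v = half (tag (val u)) -> max_distant u v.
Proof.
move=> hu E duv w adj_uw; have [b wb adj_ub] := notV1_nbr hu adj_uw.
have [Eb _] := cyc_adjP adj_ub.
rewrite duv cdist_ndist (ndist_same _ wb) (ndist_same_cycle (esym E) (esym Eb)).
by have := cycd_le_half (half (tag (val u))) (tagged (val v)) (tagged b); rewrite -n_half.
Qed.

Lemma max_distant_entry (u v : vertex) :
  tag (val u) < tag (val v) -> max_distant u v -> pos (val u) = 0.
Proof.
move=> lt md; have ne : tag (val v) != tag (val u) by rewrite neq_ltn lt orbT.
case: (posnP (height (val u))) => [h0 | h_pos].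
  by rewrite /pos h0 (vertex_entry (height_eq0 h0)) offset0.
have [l nb_l dl] := cycd_down (n_gt0 _) (ltn_ord _) h_pos.
have [b adj_bu [Eb El]] := cycle_nbr nb_l.
exfalso; apply: (farther_nbr adj_bu _ md); rewrite !ndist_other_cycle ?Eb //.
by have := pos_lt lt; rewrite (posE Eb) El /pos /height /dist; lia.
Qed.

Lemma max_distant_exit (u v : vertex) : ~~ inV1 v ->
  tag (val u) < tag (val v) -> max_distant v u -> pos (val v) = offset m.
Proof.
move=> hv lt md; have ne : tag (val u) != tag (val v) by rewrite neq_ltn lt.
case: (ltnP (height (val v)) (half (tag (val v)))) => [h_lt | h_ge].
  have [l nb_l dl] := cycd_up (n_half _) (n_gt0 _) (ltn_ord _) h_lt.
  have [b adj_bv [Eb El]] := cycle_nbr nb_l.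
  exfalso; apply: (farther_nbr adj_bv _ md); rewrite !ndist_other_cycle ?Eb //.
  by have := pos_lt lt; rewrite (posE Eb) El /pos /height /dist; lia.
have hh : height (val v) = half (tag (val v)) by apply/eqP; rewrite eqn_leq height_le.
by rewrite /pos hh -offsetS (notV1_exit hv (height_eq_half hh)).
Qed.

Lemma mutual_same_cycle (u v : vertex) : ~~ inV1 u -> ~~ inV1 v ->
  tag (val u) = tag (val v) -> mutually_max_distant u v <-> cdist u v = half (tag (val u)).
Proof.
move=> hu hv E; split => [[md _] | duv]; first exact: max_distant_same_cycle.
split; first exact: half_max_distant.
by apply: (half_max_distant hv (esym E)); rewrite cdist_sym duv E.
Qed.

Lemma mutual_other_cycle (u v : vertex) : ~~ inV1 u -> ~~ inV1 v ->
  tag (val u) <> tag (val v) -> mutually_max_distant u v <-> cdist u v = cdiam n.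
Proof.
move=> hu hv ne; split => [[mu mv] | duv]; last first.
  by split => w _; rewrite ?duv ?[cdist v u]cdist_sym ?duv cdist_le_diam.
have far_apart (x y : vertex) : ~~ inV1 y -> tag (val x) < tag (val y) ->
    max_distant x y -> max_distant y x -> cdist x y = offset m.
  move=> hy lt mxy myx; rewrite cdist_ndist ndist_other_cycle ?neq_ltn ?lt //.
  by rewrite (max_distant_entry lt mxy) (max_distant_exit hy lt myx) /dist; lia.
apply/anti_leq; rewrite cdist_le_diam (leq_trans cdiam_le_total) //.
case: (ltngtP (tag (val u)) (tag (val v))) => [lt | gt | /val_inj //].
  by rewrite (far_apart u v hv lt mu mv).
by rewrite cdist_sym (far_apart v u hu gt mv mu).
Qed.
End ChainCycleDistance.

Theorem theorem3p3 (m : nat) (n : 'I_m -> nat)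
    (hm : 2 <= m) (hn4 : forall i, 4 <= n i) (hnev : forall i, ~~ odd (n i))
    (u v : cvert n) (hu : ~~ inV1 u) (hv : ~~ inV1 v) (huv : u != v) :
  (tag (val u) = tag (val v) ->
     (mutually_max_distant u v <-> cdist u v = (n (tag (val u)))./2)) /\
  (tag (val u) <> tag (val v) ->
     (mutually_max_distant u v <-> cdist u v = cdiam n)).
Proof.
have n_gt0 i : 0 < n i by apply: leq_trans (hn4 i).
split => E; first exact: (mutual_same_cycle n_gt0 hnev hu hv E).
exact: (mutual_other_cycle n_gt0 hnev hu hv E).
Qed.
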